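(* Let $\mathcal{E}$ be a left $\tilde{\mathcal{A}}_{conv.}$-module such that (1) $B(\mathcal{E})\subset\tilde A(\mathcal{E})$ and (2) there exists $N\in\mathbb{N}$ with $a^N\tilde A(\mathcal{E})=0$. Then $B(\mathcal{E})=\tilde A(\mathcal{E})\subset\ker b^{2N}$.
   Context: $\tilde{\mathcal{A}}_{conv.}$ is the algebra of formal series $\sum\gamma_{p,q}a^pb^q$ in variables $a,b$ with $ab-ba=b^2$ such that $|\gamma_{p,q}|\le C_RR^{p+q}q!$ for some $R>1$, $C_R>0$; $B=\mathbb{C}\{\{b\}\}$ is its subalgebra of series $\sum c_qb^q$ with $|c_q|\le CR^qq!$. For a left $\tilde{\mathcal{A}}_{conv.}$-module $\mathcal{E}$: $B(\mathcal{E}):=\{x\in\mathcal{E}:\exists N,\ b^Nx=0\}$ is its $b$-torsion, $A(\mathcal{E})$ its $a$-torsion $\{x:\exists N,\ a^Nx=0\}$, and $\tilde A(\mathcal{E}):=\{x\in\mathcal{E}: Bx\subset A(\mathcal{E})\}$. *)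

From HB Require Import structures.
From mathcomp Require Import all_boot all_order all_algebra.
From mathcomp Require Import reals.
From mathcomp Require Import complex.
Set Implicit Arguments. Unset Strict Implicit. Unset Printing Implicit Defensive.
Import Order.TTheory GRing.Theory Num.Theory.
Local Open Scope ring_scope.

Section Atilde.
Variable R : realType.
Local Notation C := (R[i]).

(* A formal series  sum_{p,q} s p q * a^p b^q  (normally ordered: a's left). *)
Definition ser := nat -> nat -> C.

Definition conv (s : ser) : Prop :=
  exists (Rr CR : R), 1 < Rr /\ 0 < CR /\
    forall p q : nat, `|s p q| <= (CR * Rr ^+ (p + q) * (q`!)%:R)%:C%C.

Definition inB (s : ser) : Prop :=
  (exists (Rr CR : R), 0 < CR /\
     forall q : nat, `|s 0%N q| <= (CR * Rr ^+ q * (q`!)%:R)%:C%C)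
  /\ forall p q : nat, (0 < p)%N -> s p q = 0.

Definition ser_add (s t : ser) : ser := fun p q => s p q + t p q.
Definition ser_mono (m n : nat) : ser :=
  fun p q => if (p == m) && (q == n) then 1 else 0.
Definition ser_one : ser := ser_mono 0 0.
Definition ser_a : ser := ser_mono 1 0.
Definition ser_b : ser := ser_mono 0 1.

(* Normal ordering from ab - ba = b^2:
   b^q a^r = sum_{k=0}^{r} (-1)^k C(r,k) q(q+1)...(q+k-1) a^{r-k} b^{q+k}. *)
Definition nocoef (q r k : nat) : C :=
  (-1) ^+ k * ('C(r, k))%:R * (\prod_(i < k) (q + i))%:R.

Definition ser_mul (s t : ser) : ser := fun m n =>
  \sum_(p < m.+1) \sum_(q < n.+1) \sum_(k < (n - q).+1)
     s p q * t (m - p + k)%N (n - q - k)%N * nocoef q (m - p + k) k.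

Definition is_Amodule (E : zmodType) (act : ser -> E -> E) : Prop :=
  [/\ forall s t v, conv s -> conv t -> act (ser_add s t) v = act s v + act t v,
      forall s v w, conv s -> act s (v + w) = act s v + act s w,
      forall v, act ser_one v = v
    & forall s t v, conv s -> conv t -> act (ser_mul s t) v = act s (act t v)].

Definition Btors (E : zmodType) (act : ser -> E -> E) (v : E) : Prop :=
  exists N : nat, iter N (act ser_b) v = 0.
Definition Ators (E : zmodType) (act : ser -> E -> E) (v : E) : Prop :=
  exists N : nat, iter N (act ser_a) v = 0.
Definition Atil (E : zmodType) (act : ser -> E -> E) (v : E) : Prop :=
  forall f : ser, inB f -> Ators act (act f v).

End Atilde.

(* Write [A], [B] for the actions of [a], [b]; then [ab - ba = b^2] gives
   [A B^k = B^k (A + k B)].  For [x] in [Ã(E)] every [B^k x] is again in [Ã(E)],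
   so [A^N B^k x = 0] for all [k].  As a polynomial in [k], [(A + k B)^N x] has
   degree [N] and leading coefficient [B^N x], so its [N]-th finite difference is
   [N! B^N x].  Applying [B^N] and using [B^N (A + i B)^N x = B^(N-i) A^N B^i x = 0]
   for [i <= N] gives [N! B^(2N) x = 0]; dividing by [N!] in the vector space [E]
   yields [Ã(E) ⊂ ker b^(2N) ⊂ B(E)]. *)

From HB Require Import structures.
From mathcomp Require Import all_boot all_order all_algebra.
From mathcomp Require Import reals complex.
From Stdlib Require Import FunctionalExtensionality.
From mathcomp Require Import zify.
Set Implicit Arguments. Unset Strict Implicit. Unset Printing Implicit Defensive.
Import Order.TTheory GRing.Theory Num.Theory.
Local Open Scope ring_scope.

Section FiniteDifferences.
Variable E : zmodType.

Lemma iter_is_zmod_morphism (f : {additive E -> E}) n : zmod_morphism (iter n f).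
Proof. by elim: n => [|n IH] x y //=; rewrite IH raddfB. Qed.

HB.instance Definition _ (f : {additive E -> E}) n :=
  GRing.isZmodMorphism.Build E E (iter n f) (iter_is_zmod_morphism f n).

Definition fdiff (h : nat -> E) k := h k.+1 - h k.

Lemma iter_fdiffS n h k : iter n.+1 fdiff h k = iter n fdiff h k.+1 - iter n fdiff h k.
Proof. by []. Qed.

Lemma raddf_iter_fdiff (f : {additive E -> E}) n h k :
  f (iter n fdiff h k) = iter n fdiff (f \o h) k.
Proof. by elim: n k => [|n IH] k //; rewrite !iter_fdiffS raddfB !IH. Qed.

Lemma iter_fdiff_eq0 n h j :
  (forall i, (i <= n)%N -> h (j + i)%N = 0) -> iter n fdiff h j = 0.
Proof.
elim: n h => [|n IH] h h0; first by have := h0 0%N; rewrite addn0; apply.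
rewrite iterSr; apply: IH => i le_in.
by rewrite /fdiff -addnS !h0 ?subrr // leqW.
Qed.

Variables A B : {additive E -> E}.
Hypothesis AB : forall y, A (B y) = B (A y) + B (B y).

Definition Ashift k y := A y + B y *+ k.

Lemma Ashift_is_zmod_morphism k : zmod_morphism (Ashift k).
Proof. by move=> x y; rewrite /Ashift !raddfB mulrnBl opprD addrACA. Qed.

HB.instance Definition _ k :=
  GRing.isZmodMorphism.Build E E (Ashift k) (Ashift_is_zmod_morphism k).

Lemma AshiftS k y : Ashift k.+1 y = Ashift k y + B y.
Proof. by rewrite /Ashift mulrSr addrA. Qed.

Lemma A_iterB k y : A (iter k B y) = iter k B (Ashift k y).
Proof.
elim: k y => [|k IH] y; first by rewrite /Ashift addr0.
rewrite /= AB IH AshiftS !raddfD; congr (_ + B _); exact: iterSr.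
Qed.

Lemma iterA_iterB k n y : iter n A (iter k B y) = iter k B (iter n (Ashift k) y).
Proof. by elim: n => [|n IH] //=; rewrite IH A_iterB. Qed.

Lemma iter_fdiff_Ashift m h k :
  iter m.+1 fdiff (fun i => Ashift i (h i)) k =
  Ashift k (iter m.+1 fdiff h k) + B (iter m fdiff h k.+1) *+ m.+1.
Proof.
elim: m k => [|m IH] k.
  by rewrite /= /fdiff AshiftS raddfB addrAC.
rewrite iter_fdiffS !IH AshiftS (iter_fdiffS m.+1) [in RHS]raddfB.
set X := iter m.+1 fdiff h k.+1; set Y := iter m.+1 fdiff h k.
set U := iter m fdiff h k.+2; set V := iter m fdiff h k.+1.
have -> : B X *+ m.+2 = B X + (B U *+ m.+1 - B V *+ m.+1).
  by rewrite mulrS -mulrnBl -raddfB.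
by rewrite [in LHS]opprD [in LHS]addrACA [Z in Z + _]addrAC -addrA.
Qed.

Lemma iter_fdiff_iter_Ashift x n k :
  iter n fdiff (fun i => iter n (Ashift i) x) k = iter n B x *+ n`!.
Proof.
elim: n k => [|n IH] k; first by rewrite mulr1n.
rewrite [LHS]iter_fdiff_Ashift iter_fdiffS !IH subrr raddf0 add0r.
by rewrite raddfMn -mulrnA factS mulnC.
Qed.

Lemma iterB_double_fact_eq0 x N :
  (forall k, iter N A (iter k B x) = 0) -> iter (2 * N) B x *+ N`! = 0.
Proof.
move=> ANB; rewrite mul2n -addnn iterD -raddfMn -(iter_fdiff_iter_Ashift x N 0).
rewrite raddf_iter_fdiff; apply: iter_fdiff_eq0 => i le_iN /=.
by rewrite add0n -{1}(subnK le_iN) iterD -iterA_iterB ANB raddf0.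
Qed.

End FiniteDifferences.

Section Series.
Variable R : realType.
Local Notation C := (R[i]).
Local Notation a := (ser_a R).
Local Notation b := (ser_b R).

Lemma nocoef0 q r : nocoef R q r 0 = 1.
Proof. by rewrite /nocoef expr0 bin0 big_ord0 !mul1r. Qed.

Lemma ser_mulb (s : ser R) m n :
  ser_mul s b m n = if n is n'.+1 then s m n' else 0.
Proof.
rewrite /ser_mul big_ord_recr /= big1 ?add0r => [|p _]; last first.
  apply: big1 => q _; apply: big1 => k _.
  by rewrite /ser_b /ser_mono addn_eq0 subn_eq0 leqNgt ltn_ord mulr0 mul0r.
rewrite subnn (eq_bigr (fun q : 'I_n.+1 => s m q * b 0 (n - q)%N)) => [|q _]; last first.
  rewrite big_ord_recl big1 ?addr0 => [|k _].
    by rewrite !addn0 subn0 nocoef0 mulr1.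
  by rewrite /ser_b /ser_mono /= mulr0 mul0r.
case: n => [|n]; first by rewrite big_ord1 /ser_b /ser_mono mulr0.
rewrite (bigD1 (Ordinal (leqnSn n.+1))) //= big1 => [|q /eqP ne_qn].
  by rewrite subSnn /ser_b /ser_mono mulr1 addr0.
rewrite /ser_b /ser_mono /=; case: eqP => [e|]; last by rewrite mulr0.
by case: ne_qn; apply: val_inj => /=; have := ltn_ord q; lia.
Qed.

Lemma ser_bmul (t : ser R) m n :
  ser_mul b t m n = if n is n'.+1 then
    \sum_(k < n) t (m + k)%N (n' - k)%N * nocoef R 1 (m + k) k else 0.
Proof.
rewrite /ser_mul big_ord_recl [X in _ + X]big1 ?addr0 => [|p _]; last first.
  by apply: big1 => q _; apply: big1 => k _; rewrite /ser_b /ser_mono /= !mul0r.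
have b_0q_eq0 q j (F G : 'I_j -> C) : b 0 q = 0 -> \sum_(k < j) b 0 q * F k * G k = 0.
  by move=> b0; apply: big1 => k _; rewrite b0 !mul0r.
case: n => [|n]; first by rewrite big_ord1 b_0q_eq0.
rewrite 2!big_ord_recl b_0q_eq0 // add0r [X in _ + X]big1 ?addr0 => [|q _]; last first.
  by rewrite b_0q_eq0.
rewrite /= /bump /= subn0 subSS subn0 addn0.
by apply: eq_bigr => k _; rewrite /ser_b /ser_mono /= mul1r.
Qed.

Lemma ser_mulab_comm :
  ser_mul a b = ser_add (ser_mul b a) (ser_mul b b).
Proof.
apply: functional_extensionality => m; apply: functional_extensionality => n.
rewrite /ser_add !ser_mulb ser_bmul; case: n => [|n]; first by rewrite addr0.
rewrite big_ord_recr /= big1 ?add0r => [|k _]; last first.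
  by rewrite /ser_a /ser_mono subn_eq0 leqNgt ltn_ord andbF !mul0r.
rewrite subnn /ser_a /ser_b /ser_mono.
case: n => [|[|n]]; case: m => [|[|m]] //=; rewrite ?mul0r ?addr0 ?add0r ?mul1r ?nocoef0 //.
by rewrite /nocoef big_ord1 binn expr1 !mulr1 addNr.
Qed.

Lemma ser_mulbb : ser_mul b b = ser_mono R 0 2.
Proof.
apply: functional_extensionality => m; apply: functional_extensionality => n.
by rewrite ser_mulb /ser_b /ser_mono; case: n => [|[|n]] //=; rewrite andbF.
Qed.

Lemma ser_mulab : ser_mul a b = ser_mono R 1 1.
Proof.
apply: functional_extensionality => m; apply: functional_extensionality => n.
by rewrite ser_mulb /ser_a /ser_mono; case: n => [|[|n]] //=; rewrite andbF.
Qed.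

Lemma norm_ser_mono_le1 m n p q : `|ser_mono R m n p q| <= 1.
Proof. by rewrite /ser_mono; case: (_ && _); rewrite ?normr1 ?normr0. Qed.

Lemma conv_bounded (s : ser R) (K : R) :
  (forall p q, `|s p q| <= K%:C%C) -> conv s.
Proof.
move=> sK; exists 2, (`|K| + 1); split; first by rewrite ltr1n.
split=> [|p q]; first by rewrite ltr_pwDr ?normr_ge0.
apply: le_trans (sK p q) _; rewrite lecR -mulrA.
have K1 : K <= `|K| + 1 by rewrite ler_wpDr ?real_ler_norm ?num_real.
apply: le_trans K1 _; rewrite ler_peMr ?addr_ge0 ?normr_ge0 //.
by rewrite mulr_ege1 ?exprn_ege1 ?ler1n ?fact_gt0.
Qed.

Lemma conv_ser_mono m n : conv (ser_mono R m n).
Proof. by apply: (@conv_bounded _ 1) => p q; rewrite norm_ser_mono_le1. Qed.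

Lemma conv_ser_mulba : conv (ser_mul b a).
Proof.
apply: (@conv_bounded _ 2) => p q.
have /(congr1 (fun s => s p q)) := ser_mulab_comm.
rewrite /ser_add ser_mulbb ser_mulab => /eqP; rewrite -subr_eq => /eqP <-.
apply: le_trans (ler_normB _ _) _.
by rewrite rmorphD /= lerD ?norm_ser_mono_le1 ?rmorph1.
Qed.

Definition ser_scalar (c : C) : ser R :=
  fun p q => if (p == 0%N) && (q == 0%N) then c else 0.

Lemma ser_scalarD c d : ser_add (ser_scalar c) (ser_scalar d) = ser_scalar (c + d).
Proof.
apply: functional_extensionality => p; apply: functional_extensionality => q.
by rewrite /ser_add /ser_scalar; case: (_ && _); rewrite ?addr0.
Qed.

Lemma conv_ser_scalar c : conv (ser_scalar c).
Proof.
apply: (@conv_bounded _ (Num.sqrt (complex.Re c ^+ 2 + complex.Im c ^+ 2))) => p q.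
by rewrite /ser_scalar -normc_def; case: (_ && _); rewrite ?normr0.
Qed.

Lemma ler_growth (r S c : R) q q' : `|r| <= S -> 1 <= S -> 0 <= c -> (q <= q')%N ->
  c * r ^+ q * q`!%:R <= c * S ^+ q' * q'`!%:R.
Proof.
move=> rS S1 c0 qq'; rewrite -!mulrA ler_wpM2l //.
apply: le_trans (_ : `|r| ^+ q * q`!%:R <= _).
  by rewrite ler_wpM2r // -normrX real_ler_norm ?num_real.
apply: ler_pM; rewrite ?exprn_ge0 ?ler_nat ?leq_fact //.
apply: le_trans (_ : S ^+ q <= _); last exact: ler_weXn2l.
by rewrite lerXn2r // nnegrE ?normr_ge0 // (le_trans _ rS).
Qed.

Lemma inB_conv (g : ser R) : inB g -> conv g.
Proof.
case=> [[r [c [c0 gr]]] g0]; have c_ge0 := ltW c0.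
exists (`|r| + 2), c; split; first by rewrite ltr_wpDl ?normr_ge0 ?ltr1n.
split=> // -[|p] q.
  apply: le_trans (gr q) _; rewrite lecR add0n.
  by rewrite ler_growth ?lerDl ?ler_wpDl ?normr_ge0 ?ler1n.
by rewrite g0 // normr0 lecR !mulr_ge0 ?exprn_ge0 ?addr_ge0 ?normr_ge0 ?ler0n.
Qed.

Lemma inB_mul_b (g : ser R) : inB g -> inB (ser_mul g b).
Proof.
case=> [[r [c [c0 gr]]] g0]; have c_ge0 := ltW c0; split; last first.
  by move=> p [|q] p0; rewrite ser_mulb ?g0.
exists (`|r| + 1), c; split=> // -[|q]; rewrite ser_mulb.
  by rewrite normr0 lecR !mulr_ge0 ?exprn_ge0 ?addr_ge0 ?normr_ge0 ?ler0n.
by apply: le_trans (gr q) _; rewrite lecR ler_growth ?lerDl ?lerDr.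
Qed.
End Series.

Section Module.
Variables (R : realType) (E : zmodType) (act : ser R -> E -> E).
Hypothesis hmod : is_Amodule act.

Lemma act_is_zmod_morphism s : conv s -> zmod_morphism (act s).
Proof.
by case: hmod => _ actD _ _ cs x y; rewrite -[in RHS](subrK y x) [in RHS]actD // addrK.
Qed.

Definition act_additive s (cs : conv s) : {additive E -> E} :=
  HB.pack (act s) (GRing.isZmodMorphism.Build E E (act s) (act_is_zmod_morphism cs)).

Lemma act_ser_scalar_mulrn (c : R[i]) n v :
  act (ser_scalar (c *+ n.+1)) v = act (ser_scalar c) v *+ n.+1.
Proof.
case: hmod => actD _ _ _; elim: n => // n IH.
rewrite mulrSr -ser_scalarD (actD _ _ _ (conv_ser_scalar _) (conv_ser_scalar _)).
by rewrite [RHS]mulrSr -IH.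
Qed.

(* [E] is a vector space over [C] through the constant series. *)
Lemma act_mulrn_eq0 n (y : E) : (0 < n)%N -> y *+ n = 0 -> y = 0.
Proof.
case: n => // n _ yn0; case: hmod => _ _ act1 _.
pose c : R[i] := n.+1%:R^-1; pose sc := act_additive (conv_ser_scalar c).
have cn1 : c *+ n.+1 = 1 by rewrite -mulr_natr mulVf ?pnatr_eq0.
rewrite -(act1 y) -[ser_one R]/(ser_scalar 1) -cn1 act_ser_scalar_mulrn.
by rewrite -(raddfMn sc) yn0 raddf0.
Qed.

Lemma act_ab_comm z : act (ser_a R) (act (ser_b R) z) =
  act (ser_b R) (act (ser_a R) z) + act (ser_b R) (act (ser_b R) z).
Proof.
case: hmod => actD _ _ actM.
have [ca cb] := (conv_ser_mono R 1 0, conv_ser_mono R 0 1).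
have cba := conv_ser_mulba R.
have cbb : conv (ser_mul (ser_b R) (ser_b R)) by rewrite ser_mulbb; apply: conv_ser_mono.
by rewrite -actM // ser_mulab_comm actD // !actM.
Qed.

Lemma Atil_act_b v : Atil act v -> Atil act (act (ser_b R) v).
Proof.
case: hmod => _ _ _ actM Av g Bg.
have [cg cb] := (inB_conv Bg, conv_ser_mono R 0 1).
by rewrite -actM //; apply: Av; apply: inB_mul_b.
Qed.

Lemma Atil_iter_b k v : Atil act v -> Atil act (iter k (act (ser_b R)) v).
Proof. by move=> Av; elim: k => //= k; apply: Atil_act_b. Qed.

End Module.

Theorem lemma2p5p3 (R : realType) (E : zmodType) (act : ser R -> E -> E)
  (hmod : is_Amodule act)
  (h1 : forall v : E, Btors act v -> Atil act v)
  (N : nat) (h2 : forall v : E, Atil act v -> iter N (act (ser_a R)) v = 0) :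
  (forall v : E, Btors act v <-> Atil act v) /\
  (forall v : E, Atil act v -> iter (2 * N) (act (ser_b R)) v = 0).
Proof.
pose A := act_additive hmod (conv_ser_mono R 1 0).
pose B := act_additive hmod (conv_ser_mono R 0 1).
have Atil_ker v : Atil act v -> iter (2 * N) B v = 0.
  move=> Av; apply: (act_mulrn_eq0 hmod (fact_gt0 N)).
  apply: (iterB_double_fact_eq0 (A := A)) => [y | k]; first exact: act_ab_comm.
  exact/h2/Atil_iter_b.
split=> // v; split=> [/h1 // | /Atil_ker Bv]; by exists (2 * N)%N.
Qed.
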